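(* Fix $\alpha>0$. For $K\ge 1$ define $\mathcal{D}:[0,1]\times[-1,1]^K\to\mathbb{R}^K$ by \[ \mathcal{D}(t,c_{1},\dots,c_{K}):=\left(e^{-4\pi^{2}\alpha t}c_{1},\,e^{-4\pi^{2}\cdot 2^{2}\alpha t}c_{2},\,\dots,\,e^{-4\pi^{2}K^{2}\alpha t}c_{K}\right). \] Then for any $0<\epsilon<1$ and $K\ge1$ there exists an MLP network $\tilde{\mathcal{D}}:\mathbb{R}^{K+1}\to\mathbb{R}^K$, consisting of dense layers and $\tanh$ as activation function, with $O(K^{3}+K\log^{2}(\epsilon^{-1}))$ weights, such that \[ \|\tilde{\mathcal{D}}(t,c_{1},\dots,c_{K})-\mathcal{D}(t,c_{1},\dots,c_{K})\|_{\infty}\leq\epsilon \] for all inputs $c_{1},\dots,c_{K}\in[-1,1]$ and $t\in[0,1]$.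
   Context: An MLP (multilayer perceptron) network is a feed-forward composition of layers, each of the form $v_j=\sigma\circ(M_j v_{j-1}+b_j)$ with a matrix $M_j$ and bias vector $b_j$ and coordinate-wise nonlinearity $\sigma$ (here $\sigma=\tanh$); in some layers the bias and/or the nonlinearity may be omitted. The ''number of weights'' is the total number of parameters (entries of all $M_j$ and $b_j$). The operator $\mathcal{D}$ is the exact spectral time-stepping map for the heat equation $u_t=\alpha u_{xx}$ on $[0,1]$ in the basis $\{\sin(2\pi kx)\}_k$. *)

From HB Require Import structures.
From mathcomp Require Import all_boot all_order all_algebra.
From mathcomp Require Import all_classical all_reals all_analysis.
Set Implicit Arguments. Unset Strict Implicit. Unset Printing Implicit Defensive.
Import Order.TTheory GRing.Theory Num.Theory.
Local Open Scope ring_scope.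

Definition tanh {R : realType} (x : R) : R :=
  (expR x - expR (- x)) / (expR x + expR (- x)).

(* A dense layer R^n -> R^m : v |-> sigma (M v + b), where the bias b and the
   nonlinearity sigma = tanh (coordinate-wise) may each be omitted. *)
Record layer (R : realType) (n m : nat) := Layer {
  lay_mat : 'M[R]_(m, n);
  lay_bias : option 'cV[R]_m;
  lay_act : bool }.

Definition eval_layer (R : realType) n m (L : layer R n m) (v : 'cV[R]_n)
  : 'cV[R]_m :=
  let w := lay_mat L *m v + (if lay_bias L is Some b then b else 0) in
  if lay_act L then map_mx (@tanh R) w else w.

Definition layer_weights (R : realType) n m (L : layer R n m) : nat :=
  (m * n + (if lay_bias L is Some _ then m else 0))%N.

Inductive mlp (R : realType) : nat -> nat -> Type :=
| mlp_nil n : mlp R n n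
| mlp_cons n m p : layer R n m -> mlp R m p -> mlp R n p.

Fixpoint eval_mlp (R : realType) n p (N : mlp R n p) : 'cV[R]_n -> 'cV[R]_p :=
  match N in mlp _ n p return 'cV[R]_n -> 'cV[R]_p with
  | mlp_nil _ => fun v => v
  | mlp_cons _ _ _ L N' => fun v => eval_mlp N' (eval_layer L v)
  end.

Fixpoint mlp_weights (R : realType) n p (N : mlp R n p) : nat :=
  match N with
  | mlp_nil _ => 0%N
  | mlp_cons _ _ _ L N' => (layer_weights L + mlp_weights N')%N
  end.

(* the exact spectral heat-equation time stepper, component k (0-based index
   i corresponds to k = i+1): exp(-4 pi^2 k^2 alpha t) c_k *)
Definition heatD (R : realType) (alpha : R) (K : nat) (t : R) (c : 'cV[R]_K)
  : 'cV[R]_K :=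
  \col_(i < K) (expR (- (4 * pi ^+ 2 * (i.+1)%:R ^+ 2 * alpha * t)) * c i 0).

(* Far in its left tail a tanh unit computes an exponential:
   tanh ((x - ln M) / 2) = (e^x - M) / (e^x + M) = -1 + 2 e^x / M + O(e^(2x) / M^2).
   Feeding it x = -lambda_k t +- h c_k, the difference of the two units is
   (2 / M) (1 + O(1/M)) e^(-lambda_k t) (e^(h c_k) - e^(-h c_k)), and
   e^(h c) - e^(-h c) = 2 h c + O(h^2).  So one hidden layer of 2K tanh units and a
   linear read-out with gain M / (4h) approximate the heat stepper to accuracy
   h + O(1/M); h = eps/2 and M = 16/eps give eps with 4K^2 + 4K weights. *)

From HB Require Import structures.
From mathcomp Require Import all_boot all_order all_algebra.
From mathcomp Require Import all_classical all_reals all_analysis.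
From mathcomp Require Import ring lra zify.
Import Order.TTheory GRing.Theory Num.Theory.
Local Open Scope ring_scope.

Section TanhTail.
Context {R : realType}.
Implicit Types a b c h s x y D M : R.

Lemma tanh_half_sub_ln x M : 0 < M ->
  tanh ((x - ln M) / 2) = (expR x - M) / (expR x + M).
Proof.
move=> M0; set w := (x - ln M) / 2.
have ww : expR w * expR w = expR x / M.
  by rewrite -expRD /w (_ : _ + _ = x - ln M) ?expRD ?expRN ?lnK ?posrE //; field.
have w0 := expR_gt0 w.
rewrite /tanh expRN (_ : expR x = expR w * expR w * M); last first.
  by rewrite ww mulfVK ?gt_eqF.
field; rewrite gt_eqF //; nra.
Qed.

Lemma sinh_sub_id_le y : `|y| <= 1/2 -> expR y - expR (- y) - 2 * y <= 2 * y ^+ 2.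
Proof.
rewrite ler_norml => /andP[y1 y2].
have eyN : expR y * expR (- y) = 1 by rewrite -expRD subrr expR0.
have ey0 := expR_gt0 y.
have eyN_ge := expR_ge1Dx (- y).
have : expR y * (1 - y) <= expR y * expR (- y) by rewrite ler_pM2l //; lra.
rewrite eyN.
have : expR y <= 1 + y + 2 * y ^+ 2 by nra.
lra.
Qed.

Lemma norm_sinh_sub_id_le y : `|y| <= 1/2 ->
  `|expR y - expR (- y) - 2 * y| <= 2 * y ^+ 2.
Proof.
move=> y_small; rewrite ler_norml sinh_sub_id_le // andbT.
have := @sinh_sub_id_le (- y); rewrite normrN opprK sqrrN => /(_ y_small).
lra.
Qed.

Lemma tanh_tail_diff a b M : 0 < a -> 0 < b -> 0 < M ->
  (a - M) / (a + M) - (b - M) / (b + M) = 2 * M * (a - b) / ((a + M) * (b + M)).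
Proof. by move=> a0 b0 M0; field; rewrite !gt_eqF ?addr_gt0. Qed.

Lemma tail_ratio_defect a b M : 0 < a -> 0 < b -> a + b <= 4 -> a * b <= 1 ->
  1 <= M -> 0 <= 1 - M ^+ 2 / ((a + M) * (b + M)) <= 5 / M.
Proof.
move=> a0 b0 ab4 ab1 M1.
have den0 : 0 < (a + M) * (b + M) by apply: mulr_gt0; lra.
have -> : 1 - M ^+ 2 / ((a + M) * (b + M)) = (M * (a + b) + a * b) / ((a + M) * (b + M)).
  by field; rewrite !gt_eqF //; lra.
have M0 : 0 < M by lra.
apply/andP; split; first by rewrite divr_ge0 //; nra.
rewrite ler_pdivlMr // mulrAC ler_pdivrMr //.
nra.
Qed.

Lemma expR_le2 y : y <= 1/2 -> expR y <= 2.
Proof.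
move=> y_le; have eyN : expR y * expR (- y) = 1 by rewrite -expRD subrr expR0.
have := expR_ge1Dx (- y); have := expR_gt0 y; nra.
Qed.

Lemma sinh_quotient_approx D h c : 0 < D <= 1 -> 0 < h <= 1/2 -> `|c| <= 1 ->
  `|(D * expR (h * c) - D * expR (- (h * c))) / (2 * h) - D * c| <= h.
Proof.
move=> /andP[D0 D1] /andP[h0 h1] c1.
have hc_small : `|h * c| <= 1/2.
  by rewrite normrM (gtr0_norm h0); nra.
have -> : (D * expR (h * c) - D * expR (- (h * c))) / (2 * h) - D * c =
    D * (expR (h * c) - expR (- (h * c)) - 2 * (h * c)) / (2 * h).
  by field; rewrite gt_eqF.
have h2 : 0 < 2 * h by rewrite mulr_gt0.
rewrite normrM normfV normrM (gtr0_norm D0) (gtr0_norm h2) ler_pdivrMr //.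
have := norm_sinh_sub_id_le _ hc_small.
have : c ^+ 2 <= 1 by rewrite -real_normK ?num_real // expr_le1.
have := normr_ge0 (expR (h * c) - expR (- (h * c)) - 2 * (h * c)).
rewrite exprMn; have := sqr_ge0 h; nra.
Qed.

Lemma tanh_pair_approx M h s c : 1 <= M -> 0 < h <= 1/2 -> s <= 0 -> `|c| <= 1 ->
  `|M / (4 * h) * (tanh ((s + h * c - ln M) / 2) - tanh ((s - h * c - ln M) / 2))
    - expR s * c| <= h + 8 / M.
Proof.
move=> M1 /andP[h0 h1] s0 c1; have M0 : 0 < M by lra.
have hc_small : `|h * c| <= 1/2.
  by rewrite normrM (gtr0_norm h0); nra.
rewrite !tanh_half_sub_ln // !expRD.
set D := expR s; set a := D * _; set b := D * _.
have D0 : 0 < D := expR_gt0 s.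
have D1 : D <= 1 by rewrite expR_le1.
have a0 : 0 < a by rewrite mulr_gt0 ?expR_gt0.
have b0 : 0 < b by rewrite mulr_gt0 ?expR_gt0.
have ab4 : a + b <= 4.
  have := expR_le2 (h * c); have := expR_le2 (- (h * c)).
  move: hc_small; rewrite ler_norml /a /b => /andP[? ?].
  have := expR_gt0 (h * c); have := expR_gt0 (- (h * c)); nra.
have ab1 : a * b <= 1.
  have pq : expR (h * c) * expR (- (h * c)) = 1 by rewrite -expRD subrr expR0.
  by rewrite /a /b mulrACA pq mulr1; nra.
rewrite tanh_tail_diff //.
have -> : M / (4 * h) * (2 * M * (a - b) / ((a + M) * (b + M))) =
    (a - b) / (2 * h) * (M ^+ 2 / ((a + M) * (b + M))).
  by field; rewrite !gt_eqF //; lra.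
set S := (a - b) / _; set r := M ^+ 2 / _.
have SD : `|S - D * c| <= h by apply: sinh_quotient_approx => //; apply/andP.
have /andP[r0 r1] := tail_ratio_defect _ _ _ a0 b0 ab4 ab1 M1; rewrite -/r in r0 r1.
have S_le : `|S| <= 3/2.
  have : `|D * c| <= 1 by rewrite normrM (gtr0_norm D0); nra.
  have := ler_normD (S - D * c) (D * c); rewrite subrK; lra.
have -> : S * r - D * c = (S - D * c) - S * (1 - r) by ring.
apply: le_trans (ler_normB _ _) _; rewrite normrM (ger0_norm r0).
have : `|S| * (1 - r) <= 3/2 * (5 / M) by apply: ler_pM.
have : 3/2 * (5 / M) <= 8 / M by rewrite mulrA ler_pM2r ?invr_gt0 //; lra.
lra.
Qed.

End TanhTail.

Definition heat_rate {R : realType} (alpha : R) (k : nat) : R := 4 * pi ^+ 2 * k%:R ^+ 2 * alpha.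

Lemma heat_rate_ge0 {R : realType} (alpha : R) k : 0 <= alpha -> 0 <= heat_rate alpha k.
Proof. by move=> alpha0; rewrite /heat_rate !mulr_ge0 ?ler0n ?pi_ge0. Qed.

Section HeatNet.
Context {R : realType}.
Variables (alpha M h : R) (K : nat).

Definition tanh_pair_layer : layer R (1 + K) (K + K) :=
  Layer (col_mx (row_mx (\col_(i < K) (- heat_rate alpha i.+1 / 2)) ((h / 2)%:M))
                (row_mx (\col_(i < K) (- heat_rate alpha i.+1 / 2)) ((- (h / 2))%:M)))
        (Some (const_mx (- (ln M / 2)))) true.

Definition tanh_pair_readout : layer R (K + K) K :=
  Layer (row_mx ((M / (4 * h))%:M) ((- (M / (4 * h)))%:M)) None false.

Definition heat_net : mlp R (1 + K) K :=
  mlp_cons tanh_pair_layer (mlp_cons tanh_pair_readout (mlp_nil R K)).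

Lemma heat_net_weights : mlp_weights heat_net = (4 * K ^ 2 + 4 * K)%N.
Proof. rewrite /= /layer_weights /=; lia. Qed.

Lemma heat_net_eval t (c : 'cV[R]_K) (i : 'I_K) :
  let s := - (heat_rate alpha i.+1 * t) in
  eval_mlp heat_net (col_mx t%:M c) i 0 =
  M / (4 * h) * (tanh ((s + h * c i 0 - ln M) / 2) - tanh ((s - h * c i 0 - ln M) / 2)).
Proof.
rewrite /= /eval_layer /= addr0 mul_col_mx !mul_row_col mul_mx_scalar !mul_scalar_mx.
set X := map_mx _ _; rewrite -(vsubmxK X) mul_row_col !mul_scalar_mx !mxE.
rewrite (unsplitK (inl i : 'I_K + 'I_K)) (unsplitK (inr i : 'I_K + 'I_K)) !mxE.
by rewrite (mulNr (M / (4 * h))) -mulrBr; congr (_ * (tanh _ - tanh _)); field.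
Qed.

End HeatNet.

Theorem theorem2 (R : realType) (alpha : R) (halpha : 0 < alpha) :
  exists C : R, 0 < C /\
  forall (eps : R) (K : nat), 0 < eps -> eps < 1 -> (1 <= K)%N ->
  exists N : mlp R (1 + K) K,
    (mlp_weights N)%:R <= C * ((K%:R) ^+ 3 + K%:R * (ln (eps^-1)) ^+ 2) /\
    forall (t : R) (c : 'cV[R]_K),
      0 <= t <= 1 -> (forall i : 'I_K, -1 <= c i 0 <= 1) ->
      forall i : 'I_K,
        `| eval_mlp N (col_mx (t%:M) c) i 0 - heatD alpha t c i 0 | <= eps.
Proof.
exists 8; split; first lra.
move=> e K e0 e1 K1; exists (heat_net alpha (16 / e) (e / 2) K); split.
  rewrite heat_net_weights.
  have : (4 * K ^ 2 + 4 * K <= 8 * K ^ 3)%N by nia.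
  rewrite -(ler_nat R) natrM natrX => weights_le.
  have : 0 <= K%:R * ln e^-1 ^+ 2 :> R by rewrite mulr_ge0 ?sqr_ge0.
  lra.
move=> t c /andP[t0 _] c_bound i.
rewrite heat_net_eval /heatD mxE.
apply: le_trans (tanh_pair_approx _ _ _ _ _ _ _ _) _.
- by rewrite ler_pdivlMr //; lra.
- by apply/andP; split; lra.
- by rewrite oppr_le0 mulr_ge0 // heat_rate_ge0 // ltW.
- by rewrite ler_norml c_bound.
- by rewrite (_ : 8 / (16 / e) = e / 2); [lra | field; rewrite gt_eqF].
Qed.
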